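(* Let $q$ be a power of an odd prime $p$, and let $\ell$ be a linearized polynomial over $\mathbb F_{q^2}$. Then the function $f(x)=x^{q+1}+\ell(x^2)$ is planar on $\mathbb F_{q^2}$ if and only if $\ell(u)^2-\mathrm N(u)$ is a nonzero square in $\mathbb F_q$ for every $u\in\mathbb F_{q^2}^*$ such that $\ell(u)\in\mathbb F_q$.
   Context: $\mathrm N$ denotes the norm map from $\mathbb F_{q^2}$ to $\mathbb F_q$, $\mathrm N(u)=u^{q+1}$. A linearized polynomial over $\mathbb F_{q^2}$ is a polynomial of the form $\sum_i c_i x^{p^i}$ with $c_i\in\mathbb F_{q^2}$ (it induces an $\mathbb F_p$-linear endomorphism of $\mathbb F_{q^2}$). A function $f:\mathbb F_{q^n}\to\mathbb F_{q^n}$ (induced by a polynomial) is planar if for every $c\in\mathbb F_{q^n}^*$ the map $x\mapsto f(x+c)-f(x)$ is a permutation of $\mathbb F_{q^n}$. *)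

From mathcomp Require Import all_boot all_order all_algebra.
Set Implicit Arguments. Unset Strict Implicit. Unset Printing Implicit Defensive.
Import GRing.Theory.
Local Open Scope ring_scope.

Definition lin_eval (F : fieldType) (p : nat) (s : seq F) (x : F) : F :=
  \sum_(i < size s) s`_i * x ^+ (p ^ i).

Definition norm_q2q (F : fieldType) (q : nat) (u : F) : F := u ^+ q.+1.

Definition in_Fq (F : fieldType) (q : nat) (x : F) : bool := x ^+ q == x.

Definition planar (F : fieldType) (f : F -> F) : Prop :=
  forall c : F, c != 0 -> bijective (fun x => f (x + c) - f x).

From HB Require Import structures.
From mathcomp Require Import all_boot all_order all_algebra.
From mathcomp Require Import finfield cyclic ring.
Set Implicit Arguments. Unset Strict Implicit. Unset Printing Implicit Defensive.
Import GRing.Theory.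
Local Open Scope ring_scope.

(* For c <> 0 the map x |-> f (x + c) - f x - f c = x^q c + x c^q + 2 l(x c) is additive,
   so f is planar iff it has no nonzero root.  With u = x c and t = x c^q, such a root
   means N(t) = N(u) and t + t^q = -2 l(u), i.e. t and t^q are the two roots of
   X^2 + 2 l(u) X + N(u); conversely Hilbert 90 recovers c and x from such u and t.
   A root pair of this shape exists iff l(u) lies in F_q and the discriminant
   l(u)^2 - N(u) is not a nonzero square of F_q, because every element of F_q has a
   square root r in F_{q^2}, and r^q = r or r^q = -r. *)

Lemma pchar_nat_exp (R : nzRingType) (p i : nat) :
  p \in [pchar R] -> [pchar R].-nat (p ^ i)%N.
Proof.
move=> p_char; rewrite (eq_pnat _ (pcharf_eq p_char)) pnatX.
by rewrite pnat_id ?(pcharf_prime p_char).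
Qed.

Lemma lin_eval_zmod_morphism (F : fieldType) (p : nat) (s : seq F) :
  p \in [pchar F] -> zmod_morphism (lin_eval p s).
Proof.
move=> p_char x y; rewrite /lin_eval -sumrB; apply: eq_bigr => i _.
by rewrite -mulrBr exprDn_pchar ?exprNn_pchar ?pchar_nat_exp.
Qed.

Lemma bij_add_const_additive (V : finZmodType) (g : {additive V -> V}) (b : V) :
  bijective (fun x => g x + b) <-> (forall z, g z = 0 -> z = 0).
Proof.
split=> [/bij_inj g_inj z gz0 | g_ker].
  by apply: g_inj; rewrite /= gz0 raddf0.
apply: injF_bij => x y /addIr /eqP; rewrite -subr_eq0 -raddfB => /eqP /g_ker.
by move/eqP; rewrite subr_eq0 => /eqP.
Qed.

Lemma finField_prim_root (F : finFieldType) :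
  exists g : F, (#|F|.-1).-primitive_root g.
Proof.
have F_gt1 := finNzRing_gt1 F.
have /hasP[g _ g_prim] : has (#|F|.-1).-primitive_root (enum (predC1 (0 : F))).
  apply: has_prim_root; rewrite ?enum_uniq -?cardE ?cardC1 //.
  - by rewrite -ltnS prednK // ltnW.
  - apply/allP => x; rewrite mem_enum unity_rootE => /= x_neq0.
    apply/eqP/(mulIf x_neq0); rewrite mul1r -exprSr prednK ?expf_card //.
    exact: ltnW.
by exists g.
Qed.

Lemma unity_root_pow (F : finFieldType) (m n : nat) (x : F) :
  #|F|.-1 = (m * n)%N -> x ^+ m = 1 -> exists c, x = c ^+ n.
Proof.
move=> cardF x_m.
have [g g_prim] := finField_prim_root F.
have m_gt0 : (0 < m)%N.
  by move: (finNzRing_gt1 F); rewrite -ltn_predRL cardF muln_gt0 => /andP[].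
have x_unity : x ^+ #|F|.-1 = 1 by rewrite cardF exprM x_m expr1n.
have [[i _] /= x_g] := prim_rootP g_prim x_unity.
have : (#|F|.-1 %| i * m)%N by rewrite (prim_order_dvd g_prim) exprM -x_g x_m.
rewrite cardF [(i * m)%N]mulnC dvdn_pmul2l // => /dvdnP[j i_j].
by exists (g ^+ j); rewrite x_g i_j exprM.
Qed.

Section QuadraticExtension.

Variables (F : finFieldType) (q : nat).
Hypotheses (q_pchar : [pchar F].-nat q) (q_odd : odd q) (cardF : #|F| = (q ^ 2)%N).

Lemma q_gt1 : (1 < q)%N.
Proof. by move: (finNzRing_gt1 F); rewrite cardF; case: q => [|[]]. Qed.

Lemma two_neq0 : (2%:R : F) != 0.
Proof.
apply/eqP => two0; have pchar2 : 2%N \in [pchar F] by rewrite inE two0 eqxx.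
have q1 : q = 1%N.
  apply: (@pnat_1 2%N); last by rewrite -odd_2'nat.
  by rewrite -(eq_pnat _ (pcharf_eq pchar2)).
by move: q_gt1; rewrite q1.
Qed.

Lemma frobD (x y : F) : (x + y) ^+ q = x ^+ q + y ^+ q.
Proof. exact: exprDn_pchar. Qed.

Lemma frobB (x y : F) : (x - y) ^+ q = x ^+ q - y ^+ q.
Proof. by rewrite frobD exprNn_pchar. Qed.

Lemma frobK (x : F) : x ^+ q ^+ q = x.
Proof. by rewrite -exprM mulnn -cardF expf_card. Qed.

Lemma in_Fq_norm (u : F) : in_Fq q (norm_q2q q u).
Proof. by rewrite /in_Fq /norm_q2q exprSr exprMn frobK mulrC. Qed.

Lemma cardF_pred : #|F|.-1 = (q.-1 * q.+1)%N.
Proof. by rewrite cardF -subn1 -{2}(exp1n 2) subn_sqr subn1 addn1. Qed.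

Lemma sqr_of_in_Fq (d : F) : in_Fq q d -> exists r, r ^+ 2 = d.
Proof.
move=> /eqP d_q; have [->|d_neq0] := eqVneq d 0; first by exists 0; rewrite expr0n.
have d_unity : d ^+ q.-1 = 1.
  by apply: (mulIf d_neq0); rewrite mul1r -exprSr prednK ?d_q // ltnW ?q_gt1.
have [c ->] := unity_root_pow cardF_pred d_unity.
exists (c ^+ q.+1./2); rewrite -exprM muln2 -[in RHS](odd_double_half q.+1) /=.
by rewrite q_odd.
Qed.

Lemma hilbert90 (w : F) : w ^+ q.+1 = 1 -> exists2 c, c != 0 & c ^+ q = w * c.
Proof.
move=> w_norm; have [c w_c] := unity_root_pow (etrans cardF_pred (mulnC _ _)) w_norm.
have c_neq0 : c != 0.
  move: w_norm; rewrite w_c -exprM -cardF_pred; apply: contra_eq_neq => ->.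
  by rewrite expr0n gtn_eqF ?ltn_predRL ?finNzRing_gt1 // eq_sym oner_neq0.
by exists c; rewrite // w_c -exprSr prednK // ltnW ?q_gt1.
Qed.

Definition nonzero_square_Fq (d : F) : Prop :=
  d != 0 /\ exists y, in_Fq q y /\ y ^+ 2 = d.

(* [t] and its conjugate [t ^+ q] are the two roots of [X^2 + 2 a X + n]. *)
Definition has_conj_roots (a n : F) : Prop :=
  exists t, norm_q2q q t = n /\ t + t ^+ q = - (a *+ 2).

Lemma has_conj_roots_in_Fq (a n : F) : has_conj_roots a n -> in_Fq q a.
Proof.
case=> t [_ t_trace]; apply/eqP/(mulIf two_neq0); rewrite !mulr_natr.
have : (t + t ^+ q) ^+ q = t + t ^+ q by rewrite frobD frobK addrC.
by rewrite t_trace exprNn_pchar // mulr2n frobD -mulr2n => /oppr_inj.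
Qed.

Lemma nonzero_square_FqE (a n : F) : in_Fq q a -> in_Fq q n ->
  nonzero_square_Fq (a ^+ 2 - n) <-> ~ has_conj_roots a n.
Proof.
move=> /eqP a_q /eqP n_q; split.
- (* (t + a)^2 = y^2 puts t in F_q, and then the trace forces t = -a. *)
  case=> D_neq0 [y [/eqP y_q y_sqr]] [t [t_norm t_trace]].
  have ta_sqr : (t + a) ^+ 2 = y ^+ 2.
    rewrite y_sqr -t_norm /norm_q2q [t ^+ q.+1]exprSr.
    have -> : a ^+ 2 = (t + a) ^+ 2 + t * (- (a *+ 2)) - t ^+ 2 by ring.
    rewrite -t_trace; ring.
  have t_q : t ^+ q = t.
    have : (t + a) ^+ q = t + a.
      by move/eqP: ta_sqr; rewrite eqf_sqr => /orP[] /eqP ->; rewrite ?exprNn_pchar // y_q.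
    by rewrite frobD a_q => /addIr.
  have ta0 : t + a = 0.
    apply: (mulIf two_neq0); rewrite mul0r mulr_natr mulrnDl mulr2n -{2}t_q.
    by rewrite t_trace addNr.
  by move: D_neq0; rewrite -y_sqr -ta_sqr ta0 expr0n eqxx.
- move=> no_roots; have D_q : in_Fq q (a ^+ 2 - n).
    by rewrite /in_Fq frobB exprAC a_q n_q.
  have [r r_sqr] := sqr_of_in_Fq D_q.
  have [r_qN | r_qNN] := eqVneq (r ^+ q) (- r).
    case: no_roots; exists (r - a); rewrite /norm_q2q exprSr frobB r_qN a_q.
    split; last by ring.
    by transitivity (a ^+ 2 - r ^+ 2); [ring | rewrite r_sqr; ring].
  have /eqP r_q : r ^+ q == r.
    have : (r ^+ q) ^+ 2 == r ^+ 2 by rewrite exprAC r_sqr (eqP D_q).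
    by rewrite eqf_sqr (negbTE r_qNN) orbF.
  split; last by exists r; split; first exact/eqP.
  rewrite -r_sqr sqrf_eq0; apply: contra_neq r_qNN => ->.
  by rewrite expr0n gtn_eqF ?oppr0 // ltnW ?q_gt1.
Qed.

Section Planarity.

Variable l : {additive F -> F}.

Definition diff_lin (c x : F) : F := x ^+ q * c + x * c ^+ q + l (x * c) *+ 2.

Lemma diff_linE (c x : F) :
  (x + c) ^+ q.+1 + l ((x + c) ^+ 2) - (x ^+ q.+1 + l (x ^+ 2))
  = diff_lin c x + (c ^+ q.+1 + l (c ^+ 2)).
Proof.
rewrite /diff_lin sqrrD !(raddfD l) ![_ ^+ q.+1]exprSr frobD; ring.
Qed.

Lemma diff_lin_zmod_morphism (c : F) : zmod_morphism (diff_lin c).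
Proof. by move=> x y; rewrite /diff_lin frobB !mulrBl raddfB /=; ring. Qed.

HB.instance Definition _ (c : F) :=
  GRing.isZmodMorphism.Build F F (diff_lin c) (diff_lin_zmod_morphism c).

Lemma planar_diff_lin_ker :
  planar (fun x => x ^+ q.+1 + l (x ^+ 2)) <->
  (forall c x, c != 0 -> diff_lin c x = 0 -> x = 0).
Proof.
have bij_diffE c : bijective (fun x => diff_lin c x + (c ^+ q.+1 + l (c ^+ 2))) <->
    bijective (fun x => (x + c) ^+ q.+1 + l ((x + c) ^+ 2) - (x ^+ q.+1 + l (x ^+ 2))).
  by split=> /eq_bij; apply=> x; rewrite diff_linE.
split=> [planar_f c x c_neq0 | ker c c_neq0].
  by move: x; apply/bij_add_const_additive/bij_diffE/planar_f.
by apply/bij_diffE/bij_add_const_additive => x; exact: ker.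
Qed.

Lemma diff_lin_ker_conj_roots (c x : F) :
  diff_lin c x = 0 -> has_conj_roots (l (x * c)) (norm_q2q q (x * c)).
Proof.
move=> x_ker; exists (x * c ^+ q).
rewrite /norm_q2q !exprSr !exprMn frobK; split; first by ring.
by apply/eqP; rewrite -subr_eq0 opprK -x_ker /diff_lin; apply/eqP; ring.
Qed.

Lemma conj_roots_diff_lin_ker (u : F) : u != 0 ->
  has_conj_roots (l u) (norm_q2q q u) ->
  exists c x, [/\ c != 0, x != 0 & diff_lin c x = 0].
Proof.
move=> u_neq0 [t []]; rewrite /norm_q2q !exprSr => t_norm t_trace.
have t_neq0 : t != 0.
  by apply: contra_eq_neq t_norm => ->; rewrite mulr0 eq_sym mulf_neq0 ?expf_neq0.
have [c c_neq0 c_q] : exists2 c, c != 0 & c ^+ q = t / u * c.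
  by apply: hilbert90; rewrite expr_div_n !exprSr t_norm mulfV ?mulf_neq0 ?expf_neq0.
exists c, (u / c); split; first by [].
  by rewrite mulf_neq0 ?invr_eq0.
have t_q : t ^+ q = u ^+ q * u / t by rewrite -t_norm mulfK.
rewrite /diff_lin divfK // exprMn exprVn c_q t_q in t_trace *.
by rewrite -[l u *+ 2]opprK -t_trace; field; apply/and3P.
Qed.

Lemma planar_conj_roots :
  planar (fun x => x ^+ q.+1 + l (x ^+ 2)) <->
  (forall u, u != 0 -> ~ has_conj_roots (l u) (norm_q2q q u)).
Proof.
rewrite planar_diff_lin_ker; split=> [ker u u_neq0 | no_roots c x c_neq0 x_ker].
  case/(conj_roots_diff_lin_ker u_neq0) => c [x [c_neq0 x_neq0 x_ker]].
  by move: x_neq0; rewrite (ker c x c_neq0 x_ker) eqxx.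
have [//|x_neq0] := eqVneq x 0; case: (no_roots (x * c)).
  exact: mulf_neq0.
exact: diff_lin_ker_conj_roots.
Qed.

End Planarity.

End QuadraticExtension.

Theorem proposition2p1 (F : finFieldType) (p k q : nat) (s : seq F) :
  prime p -> odd p -> (0 < k)%N -> q = (p ^ k)%N -> #|F| = (q ^ 2)%N ->
  planar (fun x : F => x ^+ q.+1 + lin_eval p s (x ^+ 2)) <->
  (forall u : F, u != 0 -> in_Fq q (lin_eval p s u) ->
     lin_eval p s u ^+ 2 - norm_q2q q u != 0 /\
     exists y : F, in_Fq q y /\ y ^+ 2 = lin_eval p s u ^+ 2 - norm_q2q q u).
Proof.
move=> p_prime p_odd _ -> cardF.
have p_char : p \in [pchar F].
  by apply: (@card_finPcharP _ _ (k * 2)); rewrite // cardF expnM.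
have q_pchar := pchar_nat_exp k p_char.
have q_odd : odd (p ^ k) by rewrite oddX p_odd orbT.
pose l : {additive F -> F} := HB.pack (lin_eval p s)
  (GRing.isZmodMorphism.Build F F (lin_eval p s) (lin_eval_zmod_morphism s p_char)).
have norm_Fq := in_Fq_norm cardF.
have nz_sqrE := nonzero_square_FqE q_pchar q_odd cardF.
rewrite (planar_conj_roots q_pchar cardF l).
split=> [no_roots u u_neq0 lu_Fq | nz_sqr u u_neq0 roots].
  by apply/(nz_sqrE _ _ lu_Fq (norm_Fq u)); apply: no_roots.
have lu_Fq := has_conj_roots_in_Fq q_pchar q_odd cardF roots.
exact: (nz_sqrE _ _ lu_Fq (norm_Fq u)).1 (nz_sqr u u_neq0 lu_Fq) roots.
Qed.
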